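(* Let $G=(V,E)$ be a graph and consider an exponential bottleneck routing game on $G$ with $N$ players, where player $\pi_i$ has a strategy set $\mathcal{P}_i$ of paths in $G$ from $u_i$ to $v_i$, and let $L=\max\{|p| : p\in \bigcup_i \mathcal{P}_i\}$ be the maximum length of a path in the players' strategy sets. Then the price of anarchy (over pure Nash-routings, with respect to the social cost $C$) satisfies $$PoA = O(\log L \cdot \log |E|),$$ i.e. for every Nash-routing $\mathbf{p}$ and every routing $\mathbf{p}^*$ minimizing the social cost, $C(\mathbf{p})/C(\mathbf{p}^* ) = O(\log L\cdot \log|E|)$, where the implied constant is absolute.
   Context: A routing (pure strategy profile) is $\mathbf{p}=[p_1,\dots,p_N]$ with $p_i\in\mathcal{P}_i$. For an edge $e$, its congestion $C_e(\mathbf{p})$ is the number of paths of $\mathbf{p}$ using $e$. The social cost is $C(\mathbf{p})=\max_{e\in E} C_e(\mathbf{p})$. In an exponential bottleneck game the cost of player $\pi_i$ is $\widetilde C_i(\mathbf{p})=\sum_{e\in p_i} 2^{C_e(\mathbf{p})}$. A routing $\mathbf{p}$ is a Nash-routing if no player can lower its cost by unilaterally changing its path to another path of its strategy set: $\widetilde C_i(\mathbf{p})\le \widetilde C_i(p_i';\mathbf{p}_{-i})$ for all $i$ and all $p_i'\in\mathcal{P}_i$. The price of anarchy is $\sup_{\mathbf{p}} C(\mathbf{p})/C^*$ over Nash-routings $\mathbf{p}$, where $C^*$ is the minimum of $C$ over all routings. Logarithms are base 2. *)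

From Stdlib Require Import Reals.
From mathcomp Require Import all_boot.

Set Implicit Arguments.
Unset Strict Implicit.
Unset Printing Implicit Defensive.

(* A (multi)graph G = (V, E): finite vertex type V, finite edge type E,
   each edge e has endpoints [ends e]. Edges are traversed in either
   direction (undirected graph). *)

Fixpoint is_walk (V : eqType) (E : Type) (ends : E -> V * V)
    (u : V) (s : seq E) (v : V) : bool :=
  match s with
  | [::] => u == v
  | e :: s' =>
      ((ends e).1 == u) && is_walk ends (ends e).2 s' v
      || ((ends e).2 == u) && is_walk ends (ends e).1 s' v
  end.

Definition is_path (V : eqType) (E : eqType) (ends : E -> V * V)
    (u : V) (p : seq E) (v : V) : bool :=
  is_walk ends u p v && uniq p.

Section Game.
Variables (E : finType) (N : nat).

Definition routing := 'I_N -> seq E.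

Definition is_routing (P : 'I_N -> seq (seq E)) (r : routing) : Prop :=
  forall i, r i \in P i.

Definition congestion (r : routing) (e : E) : nat :=
  #|[set i : 'I_N | e \in r i]|.

Definition social_cost (r : routing) : nat :=
  \max_(e : E) congestion r e.

Definition player_cost (r : routing) (i : 'I_N) : nat :=
  \sum_(e <- r i) 2 ^ congestion r e.

Definition deviate (r : routing) (i : 'I_N) (q : seq E) : routing :=
  fun j => if j == i then q else r j.

Definition is_nash (P : 'I_N -> seq (seq E)) (r : routing) : Prop :=
  is_routing P r /\
  forall i q, q \in P i -> player_cost r i <= player_cost (deviate r i q) i.

Definition is_optimal (P : 'I_N -> seq (seq E)) (r : routing) : Prop :=
  is_routing P r /\
  forall r', is_routing P r' -> social_cost r <= social_cost r'.

Definition max_path_len (P : 'I_N -> seq (seq E)) : nat :=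
  \max_(i : 'I_N) \max_(p <- P i) size p.

End Game.

Definition log2 (x : R) : R := Rdiv (ln x) (ln (IZR 2)).

(* Deviating from a Nash-routing p to the optimal path p*_i at most doubles the
   weight 2^{C_e(p)} of each edge of p*_i. Summing the Nash inequalities over
   all players and exchanging the sums gives
     sum_e C_e(p) 2^{C_e(p)} <= 2 C* sum_e 2^{C_e(p)},
   i.e. the 2^C-weighted mean congestion is at most 2C*. Hence edges of
   congestion >= 4C* carry at most half of the total weight, so the total weight
   is at most 2|E| 2^{4C*}; as it dominates 2^{C(p)}, this yields
   C(p) <= 4C* + 1 + log |E|, which is even stronger than the claimed bound. *)

From Stdlib Require Import Reals Lra.
From mathcomp Require Import all_boot.
From mathcomp Require Import zify.

Set Implicit Arguments.
Unset Strict Implicit.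
Unset Printing Implicit Defensive.

Lemma sum_exp2_le_of_mean_le (I : finType) (f : I -> nat) (c : nat) : 0 < c ->
  \sum_i f i * 2 ^ f i <= 2 * c * \sum_i 2 ^ f i ->
  \sum_i 2 ^ f i <= #|I| * 2 ^ (4 * c).+1.
Proof.
move=> c_gt0 mean_le.
pose high := \sum_(i | 4 * c <= f i) 2 ^ f i.
pose low := \sum_(i | ~~ (4 * c <= f i)) 2 ^ f i.
have split_sum : \sum_i 2 ^ f i = high + low by rewrite (bigID (fun i => 4 * c <= f i)).
have high_le : 4 * c * high <= \sum_i f i * 2 ^ f i.
  rewrite /high big_distrr /= [leqRHS](bigID (fun i => 4 * c <= f i)) /=.
  apply: leq_trans (leq_addr _ _); apply: leq_sum => i hi.
  by rewrite leq_mul2r hi orbT.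
have low_le : low <= #|I| * 2 ^ (4 * c).
  rewrite -sum_nat_const [leqRHS](bigID (fun i => 4 * c <= f i)) /=.
  apply: leq_trans (leq_addl _ _); apply: leq_sum => i hi.
  by rewrite leq_exp2l // ltnW // ltnNge.
have : c * high <= c * low by nia.
rewrite leq_pmul2l // expnS => high_le_low.
lia.
Qed.

Lemma expn_bigmax_le_sum (I : finType) (i0 : I) (f : I -> nat) :
  2 ^ (\max_i f i) <= \sum_i 2 ^ f i.
Proof.
rewrite (bigmax_eq_arg i0) //.
by rewrite (bigD1 [arg max_(i > i0) f i]) //= leq_addr.
Qed.

Section NashRouting.
Variables (E : finType) (N : nat) (P : 'I_N -> seq (seq E)).
Hypothesis strategies_uniq : forall i p, p \in P i -> uniq p.

Lemma congestion_deviate_le (r : routing E N) i q e :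
  congestion (deviate r i q) e <= (congestion r e).+1.
Proof.
rewrite /congestion.
have sub : [set j | e \in deviate r i q j] \subset i |: [set j | e \in r j].
  by apply/subsetP => j; rewrite !inE /deviate; case: eqP.
by rewrite (leq_trans (subset_leq_card sub)) // cardsU1 addnC -addn1 leq_add2l leq_b1.
Qed.

Lemma sum_paths_congestion (r : routing E N) (f : E -> nat) :
  (forall i, uniq (r i)) ->
  \sum_i \sum_(e <- r i) f e = \sum_e congestion r e * f e.
Proof.
move=> r_uniq.
under eq_bigr => i _ do rewrite (big_uniq _ (r_uniq i)) big_mkcond /=.
rewrite exchange_big /=; apply: eq_bigr => e _.
rewrite /congestion -sum_nat_const [RHS]big_mkcond /=.
by apply: eq_bigr => i _; rewrite inE.
Qed.

Section Bounds.
Variables (r rstar : routing E N).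
Hypotheses (r_nash : is_nash P r) (rstar_routing : is_routing P rstar).

Lemma nash_weighted_congestion_le :
  \sum_e congestion r e * 2 ^ congestion r e <=
  2 * social_cost rstar * \sum_e 2 ^ congestion r e.
Proof.
have [r_routing r_stable] := r_nash.
have uniq_of (h : routing E N) : is_routing P h -> forall i, uniq (h i).
  by move=> h_routing i; exact: strategies_uniq (h_routing i).
rewrite -sum_paths_congestion; last exact: uniq_of.
apply: (@leq_trans (\sum_i \sum_(e <- rstar i) 2 * 2 ^ congestion r e)).
  apply: leq_sum => i _; apply: (leq_trans (r_stable i _ (rstar_routing i))).
  rewrite /player_cost {1}/deviate eqxx; apply: leq_sum => e _.
  by rewrite -expnS leq_exp2l // congestion_deviate_le.
rewrite sum_paths_congestion; last exact: uniq_of.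
rewrite big_distrr /=; apply: leq_sum => e _.
rewrite mulnCA -mulnA leq_mul2l /= leq_mul2r.
by rewrite (leq_bigmax_cond e) ?orbT.
Qed.

Lemma nash_social_cost_eq0 : social_cost rstar = 0 -> social_cost r = 0.
Proof.
move=> opt0; have := nash_weighted_congestion_le.
rewrite opt0 muln0 mul0n leqn0 sum_nat_eq0 => /forallP all0.
apply/eqP; rewrite -leqn0; apply/bigmax_leqP => e _.
by have /implyP/(_ isT) := all0 e; rewrite muln_eq0 expn_eq0 orbF => /eqP ->.
Qed.

Lemma nash_exp2_social_cost_le : 0 < social_cost rstar ->
  2 ^ social_cost r <= #|E| * 2 ^ (4 * social_cost rstar).+1.
Proof.
move=> opt_gt0.
have [e0 _|E_empty] := pickP (fun _ : E => true); last first.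
  by move: opt_gt0; rewrite /social_cost big_pred0.
rewrite {1}/social_cost; apply: (leq_trans (expn_bigmax_le_sum e0 _)).
exact: sum_exp2_le_of_mean_le opt_gt0 nash_weighted_congestion_le.
Qed.

End Bounds.
End NashRouting.

Lemma INR_expn (m n : nat) : INR (m ^ n) = pow (INR m) n.
Proof. by elim: n => [|n IH] //=; rewrite expnS -multE mult_INR IH. Qed.

Local Open Scope R_scope.

Lemma ln2_gt0 : 0 < ln 2.
Proof. have := ln_lt_2; lra. Qed.

Lemma log2_INR_ge0 (n : nat) : 0 <= log2 (INR n).
Proof.
rewrite /log2; apply: Rmult_le_pos; last exact: Rlt_le (Rinv_0_lt_compat _ ln2_gt0).
case: n => [|[|n]]; first by rewrite /ln; case: Rlt_dec => [/Rlt_irrefl|_] //; apply: Rle_refl.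
  by rewrite ln_1; apply: Rle_refl.
by rewrite -ln_1; apply/Rlt_le/ln_increasing; rewrite ?S_INR; have := pos_INR n; lra.
Qed.

Lemma le_log2_of_expn_le (k n m : nat) :
  (2 ^ k <= n * 2 ^ m)%N -> INR k <= log2 (INR n) + INR m.
Proof.
move=> /leP/le_INR; rewrite -multE mult_INR !INR_expn /= => exp_le.
have two_pow_gt0 j : 0 < (1 + 1) ^ j by apply: pow_lt; lra.
have n_gt0 : 0 < INR n.
  case: n exp_le => [|n] exp_le; last exact/lt_0_INR/ltP.
  by have := two_pow_gt0 k; rewrite /= in exp_le; lra.
apply: Rnot_lt_le => log_lt.
suff : ln (INR n * (1 + 1) ^ m) < ln ((1 + 1) ^ k).
  have prod_gt0 := Rmult_lt_0_compat _ _ n_gt0 (two_pow_gt0 m).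
  by move/(ln_lt_inv _ _ prod_gt0 (two_pow_gt0 k)); lra.
rewrite ln_mult // !ln_pow; try lra.
have -> : 1 + 1 = 2 by lra.
have := ln2_gt0; move: log_lt; rewrite /log2 /Rdiv => log_lt ln2_pos.
have := Rmult_lt_compat_r _ _ _ ln2_pos log_lt.
by rewrite Rmult_plus_distr_r Rmult_assoc Rinv_l ?Rmult_1_r; lra.
Qed.

Theorem mainTheorem1 :
  exists c : R, Rlt 0 c /\
  forall (V E : finType) (ends : E -> V * V) (N : nat)
         (u v : 'I_N -> V) (P : 'I_N -> seq (seq E)),
    (forall i, P i != [::]) ->
    (forall i p, p \in P i -> is_path ends (u i) p (v i)) ->
    forall r rstar : routing E N,
      is_nash P r -> is_optimal P rstar ->
      Rle (INR (social_cost r))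
          (Rmult (Rmult (Rmult c (Rplus 1 (log2 (INR (max_path_len P)))))
                        (Rplus 1 (log2 (INR #|E|))))
                 (INR (social_cost rstar))).
Proof.
exists 5; split; first lra.
move=> V E ends N u v P _ P_paths r rstar r_nash [rstar_routing _].
have strategies_uniq i p : p \in P i -> uniq p by move/P_paths/andP=> [].
have logL_ge0 := log2_INR_ge0 (max_path_len P).
have logE_ge0 := log2_INR_ge0 #|E|.
have [opt0|opt_gt0] := posnP (social_cost rstar).
  rewrite (nash_social_cost_eq0 strategies_uniq r_nash rstar_routing opt0) opt0.
  by rewrite /= Rmult_0_r; apply: Rle_refl.
have := le_log2_of_expn_le
  (nash_exp2_social_cost_le strategies_uniq r_nash rstar_routing opt_gt0).
have /le_INR opt_ge1 : (1 <= social_cost rstar)%coq_nat by apply/leP.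
rewrite S_INR -multE mult_INR /=; move: logL_ge0 logE_ge0 opt_ge1.
set a := log2 _; set b := log2 _.
set x := INR (social_cost rstar); set c := INR (social_cost r).
move=> a_ge0 b_ge0 /= x_ge1 c_le.
have bx_ge_b : b <= b * x by nra.
nra.
Qed.
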